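(* Let $\mathcal{A},\mathcal{B}\in CP(n,m)$. Then: (1) $\hat\rho(\mathcal{A},\mathcal{B})\le\rho(\mathcal{A},\mathcal{B})$. (2) If $\mathcal{A}_1,\mathcal{B}_1\in CP(n,m)$ with $\mathcal{A}_1\preceq\mathcal{A}$ and $\mathcal{B}\preceq\mathcal{B}_1$, then $\rho(\mathcal{A}_1,\mathcal{B}_1)\le\rho(\mathcal{A},\mathcal{B})$ and $\hat\rho(\mathcal{A}_1,\mathcal{B}_1)\le\hat\rho(\mathcal{A},\mathcal{B})$. (3) There exists a weakly optimal $Y\in\mathrm{H}_{+,1,n}$. (4) If there is a weakly optimal $Y$ with $\mathcal{B}(Y)\succ0$ or $\mathcal{A}(Y)\succ0$, and $\rho(\mathcal{A},\mathcal{B})<\infty$, then $\rho(\mathcal{A},\mathcal{B})=\hat\rho(\mathcal{A},\mathcal{B})$. (5) If $\rho(\mathcal{A},\mathcal{B})<\infty$ and either $\mathcal{A}\succ0$ or $\mathcal{B}\succ0$, then $\rho(\mathcal{A},\mathcal{B})=\hat\rho(\mathcal{A},\mathcal{B})$. (6) If $\mathcal{D}_l\in CP(n,m)$ with $\mathcal{D}_l\succ0$ for $l\in\mathbb{N}$ and $\lim_{l\to\infty}\mathcal{D}_l=0$, then $\lim_{l\to\infty}\rho(\mathcal{A},\mathcal{B}+\mathcal{D}_l)=\hat\rho(\mathcal{A},\mathcal{B})$. (7) If $\mathcal{D}_l\in CP(n,m)$ with $\mathcal{D}_l\succ0$ for $l\in\mathbb{N}$, $\lim_{l\to\infty}\mathcal{D}_l=0$,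 and $\mathcal{B}(I_n)\succ0$, then $\lim_{l\to\infty}\rho(\mathcal{A}+\mathcal{D}_l,\mathcal{B})=\rho(\mathcal{A},\mathcal{B})$.
   Context: $\mathrm{H}_n$ is the real space of $n\times n$ complex Hermitian matrices, $\mathrm{H}_{+,n}$ the cone of positive semidefinite ones, $\mathrm{H}_{++,n}$ the positive definite ones, and $\mathrm{H}_{+,1,n}$ the positive semidefinite ones of trace $1$. $X\succeq Y$ ($X\succ Y$) means $X-Y$ is positive semidefinite (definite). $CP(n,m)$ is the set of completely positive maps $\mathcal{C}:\mathrm{H}_n\to\mathrm{H}_m$, i.e. maps of the form $\mathcal{C}(X)=\sum_{j=1}^kT_jXT_j^*$ with $T_j\in\mathbb{C}^{m\times n}$. For $\mathcal{C},\mathcal{D}\in CP(n,m)$, $\mathcal{C}\succeq\mathcal{D}$ (resp. $\mathcal{C}\succ\mathcal{D}$) means $\mathcal{C}(X)\succeq\mathcal{D}(X)$ (resp. $\mathcal{C}(X)\succ\mathcal{D}(X)$) for all $X\in\mathrm{H}_{+,1,n}$. For $\mathcal{A},\mathcal{B}\in CP(n,m)$ and $X\in\mathrm{H}_{+,n}\setminus\{0\}$, $r(\mathcal{A},\mathcal{B},X)=\inf\{t\ge0: t\mathcal{B}(X)-\mathcal{A}(X)\succeq0\}\in[0,\infty]$ ($\inf\emptyset=\infty$); $\rho(\mathcal{A},\mathcal{B})=\inf\{r(\mathcal{A},\mathcal{B},X):X\in\mathrm{H}_{++,n}\}$ and $\hat\rho(\mathcal{A},\mathcal{B})=\inf\{r(\mathcal{A},\mathcal{B},X):X\in\mathrm{H}_{+,n}\setminus\{0\}\}$.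 $Y\in\mathrm{H}_{+,n}\setminus\{0\}$ is weakly optimal if $r(\mathcal{A},\mathcal{B},Y)=\hat\rho(\mathcal{A},\mathcal{B})$. Convergence of maps is in any norm on linear maps $\mathrm{H}_n\to\mathrm{H}_m$. *)

From Stdlib Require Import Reals Lra List ClassicalEpsilon.
Open Scope R_scope.

Definition C : Type := (R * R)%type.
Definition C0 : C := (0, 0).
Definition C1 : C := (1, 0).
Definition Cre (z : C) : R := fst z.
Definition Cim (z : C) : R := snd z.
Definition Cadd (z w : C) : C := (fst z + fst w, snd z + snd w).
Definition Copp (z : C) : C := (- fst z, - snd z).
Definition Cmul (z w : C) : C :=
  (fst z * fst w - snd z * snd w, fst z * snd w + snd z * fst w).
Definition Cconj (z : C) : C := (fst z, - snd z).
Definition RtoC (r : R) : C := (r, 0).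

Fixpoint csum (n : nat) (f : nat -> C) : C :=
  match n with O => C0 | S k => Cadd (csum k f) (f k) end.
Fixpoint rsum (n : nat) (f : nat -> R) : R :=
  match n with O => 0 | S k => rsum k f + f k end.

(* ---------- matrices: only entries with indices below the dimension matter -- *)
Definition Mat : Type := nat -> nat -> C.
Definition madd (X Y : Mat) : Mat := fun i j => Cadd (X i j) (Y i j).
Definition mscale (t : R) (X : Mat) : Mat := fun i j => Cmul (RtoC t) (X i j).
Definition msub (X Y : Mat) : Mat := fun i j => Cadd (X i j) (Copp (Y i j)).
Definition Id (n : nat) : Mat := fun i j => if Nat.eqb i j then C1 else C0.

Definition Herm (n : nat) (X : Mat) : Prop :=
  forall i j, (i < n)%nat -> (j < n)%nat -> X i j = Cconj (X j i).

Definition qform (n : nat) (X : Mat) (v : nat -> C) : C :=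
  csum n (fun i => csum n (fun j => Cmul (Cmul (Cconj (v i)) (X i j)) (v j))).

Definition PSD (n : nat) (X : Mat) : Prop :=
  Herm n X /\ forall v : nat -> C, 0 <= Cre (qform n X v).
Definition PD (n : nat) (X : Mat) : Prop :=
  Herm n X /\ forall v : nat -> C, (exists i, (i < n)%nat /\ v i <> C0) ->
                                 0 < Cre (qform n X v).
Definition nonzero (n : nat) (X : Mat) : Prop :=
  exists i j, (i < n)%nat /\ (j < n)%nat /\ X i j <> C0.
Definition trace (n : nat) (X : Mat) : C := csum n (fun i => X i i).
Definition PSD1 (n : nat) (X : Mat) : Prop := PSD n X /\ trace n X = C1.

Definition Map : Type := Mat -> Mat.
Definition conjug (n : nat) (T X : Mat) : Mat := fun i j =>
  csum n (fun k => csum n (fun l => Cmul (Cmul (T i k) (X k l)) (Cconj (T j l)))).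
Fixpoint kraus_sum (n : nat) (Ts : list Mat) (X : Mat) : Mat :=
  match Ts with
  | nil => fun _ _ => C0
  | T :: Ts' => madd (conjug n T X) (kraus_sum n Ts' X)
  end.
Definition is_CP (n m : nat) (F : Map) : Prop :=
  exists Ts : list Mat, forall X, Herm n X ->
    forall i j, (i < m)%nat -> (j < m)%nat -> F X i j = kraus_sum n Ts X i j.

Definition map_add (F G : Map) : Map := fun X => madd (F X) (G X).
Definition map_le (n m : nat) (F G : Map) : Prop :=
  forall X, PSD1 n X -> PSD m (msub (G X) (F X)).
Definition map_pos (n m : nat) (F : Map) : Prop :=
  forall X, PSD1 n X -> PD m (F X).
(* lim_l D_l = 0 (pointwise on H_n, equivalent to norm convergence of linear maps
   on the finite-dimensional space H_n) *)
Definition map_cv0 (n m : nat) (D : nat -> Map) : Prop :=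
  forall X, Herm n X -> forall i j, (i < m)%nat -> (j < m)%nat ->
    Un_cv (fun l => Cre (D l X i j)) 0 /\ Un_cv (fun l => Cim (D l X i j)) 0.

Inductive ER : Type := Fin (r : R) | Inf.
Definition ERle (a b : ER) : Prop :=
  match a, b with
  | Fin x, Fin y => x <= y
  | _, Inf => True
  | Inf, Fin _ => False
  end.
Definition is_glb (S : ER -> Prop) (v : ER) : Prop :=
  (forall e, S e -> ERle v e) /\ (forall w, (forall e, S e -> ERle w e) -> ERle w v).
(* infimum (inf ∅ = ∞); well defined on sets of nonnegative values *)
Definition einf (S : ER -> Prop) : ER :=
  epsilon (inhabits Inf) (is_glb S).

Definition ER_cv (u : nat -> ER) (L : ER) : Prop :=
  match L with
  | Fin l => forall eps, eps > 0 -> exists N, forall k, (k >= N)%nat ->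
               exists x, u k = Fin x /\ Rabs (x - l) < eps
  | Inf => forall M : R, exists N, forall k, (k >= N)%nat -> ERle (Fin M) (u k)
  end.

Definition r_val (m : nat) (A B : Map) (X : Mat) : ER :=
  einf (fun e => exists t, e = Fin t /\ 0 <= t /\ PSD m (msub (mscale t (B X)) (A X))).
Definition rho (n m : nat) (A B : Map) : ER :=
  einf (fun e => exists X, PD n X /\ e = r_val m A B X).
Definition rhohat (n m : nat) (A B : Map) : ER :=
  einf (fun e => exists X, PSD n X /\ nonzero n X /\ e = r_val m A B X).
Definition weakly_optimal (n m : nat) (A B : Map) (Y : Mat) : Prop :=
  PSD n Y /\ nonzero n Y /\ r_val m A B Y = rhohat n m A B.

(* Since [A] and [B] are positive and linear, [r(A,B,X)] is invariant under scaling [X],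
   so [rhohat] may be computed on density matrices. These form a compact set on which
   feasibility of a ratio is a closed condition; this yields a weakly optimal density (3)
   and, applied to approximate minimizers with a vanishing error, the lower bound in (6).
   Conversely, a feasible PSD matrix [Y] with [B(Y)] positive definite can be replaced by
   the positive definite [Y + eI] at an arbitrarily small cost, because the coercivity of
   [B(Y)] absorbs [e (t B(I) - A(I))]; this gives (4), (5) and the upper bound in (6).
   In (7), [B(I) > 0] makes [B(X)] coercive for every [X > 0], which absorbs the vanishing
   perturbation [D_l(X)]. *)

From Stdlib Require Import Reals Lra Lia List Classical ClassicalEpsilon Ring.
Open Scope R_scope.

Lemma C_ext (z w : C) : fst z = fst w -> snd z = snd w -> z = w.
Proof. destruct z, w; simpl; intros; subst; reflexivity. Qed.

Definition Csub (z w : C) : C := Cadd z (Copp w).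

Lemma C_ring : ring_theory C0 C1 Cadd Cmul Csub Copp (@eq C).
Proof.
  constructor; intros; unfold C0, C1, Cadd, Cmul, Csub, Copp; apply C_ext; simpl;
    destruct x; try destruct y; try destruct z; simpl; ring.
Qed.
Add Ring Cring : C_ring.

Lemma Cconj_add z w : Cconj (Cadd z w) = Cadd (Cconj z) (Cconj w).
Proof. apply C_ext; simpl; ring. Qed.
Lemma Cconj_mul z w : Cconj (Cmul z w) = Cmul (Cconj z) (Cconj w).
Proof. apply C_ext; simpl; ring. Qed.
Lemma Cconj_opp z : Cconj (Copp z) = Copp (Cconj z).
Proof. apply C_ext; simpl; ring. Qed.
Lemma Cconj_involutive z : Cconj (Cconj z) = z.
Proof. apply C_ext; simpl; ring. Qed.
Lemma Cconj_RtoC t : Cconj (RtoC t) = RtoC t.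
Proof. apply C_ext; simpl; ring. Qed.
Lemma Cconj_C0 : Cconj C0 = C0.
Proof. apply C_ext; simpl; ring. Qed.

Lemma csum_ext n f g : (forall i, (i < n)%nat -> f i = g i) -> csum n f = csum n g.
Proof.
  induction n; simpl; intros H; auto.
  f_equal; [apply IHn; intros|]; apply H; lia.
Qed.
Lemma rsum_ext n f g : (forall i, (i < n)%nat -> f i = g i) -> rsum n f = rsum n g.
Proof.
  induction n; simpl; intros H; auto.
  f_equal; [apply IHn; intros|]; apply H; lia.
Qed.
Lemma csum_zero n : csum n (fun _ => C0) = C0.
Proof. induction n; simpl; auto. rewrite IHn; ring. Qed.
Lemma csum_eq0 n f : (forall i, (i < n)%nat -> f i = C0) -> csum n f = C0.
Proof. intros H. rewrite (csum_ext n f (fun _ => C0)) by auto. apply csum_zero. Qed.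
Lemma csum_add n f g : csum n (fun i => Cadd (f i) (g i)) = Cadd (csum n f) (csum n g).
Proof. induction n; simpl. ring. rewrite IHn; ring. Qed.
Lemma csum_opp n f : csum n (fun i => Copp (f i)) = Copp (csum n f).
Proof. induction n; simpl. apply C_ext; simpl; ring. rewrite IHn; ring. Qed.
Lemma csum_mull n z f : csum n (fun i => Cmul z (f i)) = Cmul z (csum n f).
Proof. induction n; simpl. ring. rewrite IHn; ring. Qed.
Lemma csum_mulr n z f : csum n (fun i => Cmul (f i) z) = Cmul (csum n f) z.
Proof. induction n; simpl. ring. rewrite IHn; ring. Qed.
Lemma csum_conj n f : Cconj (csum n f) = csum n (fun i => Cconj (f i)).
Proof. induction n; simpl. apply C_ext; simpl; ring. rewrite Cconj_add, IHn; auto. Qed.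
Lemma csum_swap n p f :
  csum n (fun i => csum p (fun j => f i j)) = csum p (fun j => csum n (fun i => f i j)).
Proof. induction n; simpl. rewrite csum_zero; auto. rewrite IHn, <- csum_add; auto. Qed.
Lemma csum_single n f i : (i < n)%nat ->
  (forall k, (k < n)%nat -> k <> i -> f k = C0) -> csum n f = f i.
Proof.
  induction n; intros Hi H; [lia|]; simpl.
  destruct (Nat.eq_dec i n) as [->|].
  - rewrite csum_eq0 by (intros; apply H; lia). ring.
  - rewrite IHn, (H n) by (try lia; intros; apply H; lia). ring.
Qed.
Lemma csum_pair n f i j : (i < n)%nat -> (j < n)%nat -> i <> j ->
  (forall k, (k < n)%nat -> k <> i -> k <> j -> f k = C0) -> csum n f = Cadd (f i) (f j).
Proof.
  induction n; intros Hi Hj Hij H; [lia|]; simpl.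
  destruct (Nat.eq_dec i n) as [->|]; [|destruct (Nat.eq_dec j n) as [->|]].
  - rewrite (csum_single n f j) by (try lia; intros; apply H; lia). ring.
  - rewrite (csum_single n f i) by (try lia; intros; apply H; lia). ring.
  - rewrite IHn, (H n) by (try lia; intros; apply H; lia). ring.
Qed.

Lemma Cre_csum n f : Cre (csum n f) = rsum n (fun i => Cre (f i)).
Proof. induction n; simpl; auto. rewrite <- IHn; reflexivity. Qed.
Lemma Cim_csum n f : Cim (csum n f) = rsum n (fun i => Cim (f i)).
Proof. induction n; simpl; auto. rewrite <- IHn; reflexivity. Qed.

Lemma rsum_scal n c f : rsum n (fun i => c * f i) = c * rsum n f.
Proof. induction n; simpl. ring. rewrite IHn; ring. Qed.
Lemma rsum_const n c : rsum n (fun _ => c) = INR n * c.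
Proof. induction n; [simpl; ring|]. rewrite S_INR; simpl; rewrite IHn; ring. Qed.
Lemma rsum_le n f g : (forall i, (i < n)%nat -> f i <= g i) -> rsum n f <= rsum n g.
Proof.
  induction n; simpl; intros H; [lra|].
  assert (f n <= g n) by (apply H; lia).
  assert (rsum n f <= rsum n g) by (apply IHn; intros; apply H; lia). lra.
Qed.
Lemma rsum_nonneg n f : (forall i, (i < n)%nat -> 0 <= f i) -> 0 <= rsum n f.
Proof.
  intros H. rewrite <- (Rmult_0_r (INR n)), <- rsum_const. apply rsum_le; auto.
Qed.
Lemma rsum_single_le n f i : (forall k, (k < n)%nat -> 0 <= f k) -> (i < n)%nat ->
  f i <= rsum n f.
Proof.
  induction n; intros H Hi; [lia|]; simpl.
  assert (0 <= f n) by (apply H; lia).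
  destruct (Nat.eq_dec i n) as [->|].
  - assert (0 <= rsum n f) by (apply rsum_nonneg; intros; apply H; lia). lra.
  - assert (f i <= rsum n f) by (apply IHn; [intros; apply H|]; lia). lra.
Qed.
Lemma Rabs_rsum n f : Rabs (rsum n f) <= rsum n (fun i => Rabs (f i)).
Proof.
  induction n; simpl. rewrite Rabs_R0; lra.
  eapply Rle_trans. apply Rabs_triang. lra.
Qed.

Definition Q (n : nat) (X : Mat) (v : nat -> C) : R := Cre (qform n X v).
Definition Cnorm2 (z : C) : R := Cre z * Cre z + Cim z * Cim z.
Definition vnorm2 (n : nat) (v : nat -> C) : R := rsum n (fun i => Cnorm2 (v i)).
Definition agree (n : nat) (X Y : Mat) : Prop :=
  forall i j, (i < n)%nat -> (j < n)%nat -> X i j = Y i j.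

Lemma Q_ext n X Y v : agree n X Y -> Q n X v = Q n Y v.
Proof.
  intros H. unfold Q, qform. f_equal.
  apply csum_ext; intros i Hi; apply csum_ext; intros j Hj. rewrite H; auto.
Qed.
Lemma qform_madd n X Y v : qform n (madd X Y) v = Cadd (qform n X v) (qform n Y v).
Proof.
  unfold qform. rewrite <- csum_add. apply csum_ext; intros i _.
  rewrite <- csum_add. apply csum_ext; intros j _. unfold madd. ring.
Qed.
Lemma qform_mscale n t X v : qform n (mscale t X) v = Cmul (RtoC t) (qform n X v).
Proof.
  unfold qform. rewrite <- csum_mull. apply csum_ext; intros i _.
  rewrite <- csum_mull. apply csum_ext; intros j _. unfold mscale. ring.
Qed.
Lemma qform_msub n X Y v : qform n (msub X Y) v = Csub (qform n X v) (qform n Y v).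
Proof.
  unfold qform, Csub. rewrite <- csum_opp, <- csum_add. apply csum_ext; intros i _.
  rewrite <- csum_opp, <- csum_add. apply csum_ext; intros j _. unfold msub. ring.
Qed.
Lemma qform_zero_matrix n v : qform n (fun _ _ => C0) v = C0.
Proof.
  unfold qform. apply csum_eq0; intros i _. apply csum_eq0; intros j _. ring.
Qed.
Lemma qform_zero_vector n X v : (forall i, (i < n)%nat -> v i = C0) -> qform n X v = C0.
Proof.
  intros H. unfold qform. apply csum_eq0; intros i Hi. apply csum_eq0; intros j Hj.
  rewrite !H by auto. apply C_ext; simpl; ring.
Qed.

Lemma Q_madd n X Y v : Q n (madd X Y) v = Q n X v + Q n Y v.
Proof. unfold Q; rewrite qform_madd; reflexivity. Qed.
Lemma Q_msub n X Y v : Q n (msub X Y) v = Q n X v - Q n Y v.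
Proof. unfold Q; rewrite qform_msub; unfold Csub, Cre; simpl; ring. Qed.
Lemma Q_mscale n t X v : Q n (mscale t X) v = t * Q n X v.
Proof. unfold Q; rewrite qform_mscale; unfold Cre; simpl; ring. Qed.
Lemma Q_vscale n X v s : Q n X (fun i => Cmul (RtoC s) (v i)) = s * s * Q n X v.
Proof.
  rewrite <- Q_mscale. unfold Q, qform. f_equal.
  apply csum_ext; intros i _; apply csum_ext; intros j _.
  unfold mscale; apply C_ext; destruct (v i), (v j), (X i j); simpl; ring.
Qed.

Lemma vnorm2_nonneg n v : 0 <= vnorm2 n v.
Proof. apply rsum_nonneg; intros; unfold Cnorm2; nra. Qed.
Lemma vnorm2_vscale n v s : vnorm2 n (fun i => Cmul (RtoC s) (v i)) = s * s * vnorm2 n v.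
Proof.
  unfold vnorm2. rewrite <- rsum_scal. apply rsum_ext; intros.
  unfold Cnorm2; destruct (v i); simpl; ring.
Qed.
Lemma Cnorm2_le_vnorm2 n v i : (i < n)%nat -> Cnorm2 (v i) <= vnorm2 n v.
Proof.
  intros; apply (rsum_single_le n (fun i => Cnorm2 (v i))); auto.
  intros; unfold Cnorm2; nra.
Qed.
Lemma vnorm2_pos n v : 0 < vnorm2 n v <-> exists i, (i < n)%nat /\ v i <> C0.
Proof.
  split.
  - intros H. apply NNPP; intros Hn. enough (vnorm2 n v = 0) by lra.
    rewrite <- (Rmult_0_r (INR n)), <- rsum_const. apply rsum_ext; intros i Hi.
    destruct (classic (v i = C0)) as [->|E]; [unfold Cnorm2; simpl; ring|].
    exfalso; eauto.
  - intros [i [Hi Hv]]. apply Rlt_le_trans with (Cnorm2 (v i)); [|apply Cnorm2_le_vnorm2; auto].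
    unfold Cnorm2. revert Hv; destruct (v i) as [a b]; intros Hv; simpl.
    destruct (Req_dec a 0), (Req_dec b 0); subst; try nra. exfalso; apply Hv; reflexivity.
Qed.
Lemma Q_Id n v : Q n (Id n) v = vnorm2 n v.
Proof.
  unfold Q, qform, vnorm2. rewrite Cre_csum. apply rsum_ext; intros i Hi.
  rewrite (csum_single n _ i Hi).
  - unfold Id. rewrite Nat.eqb_refl. unfold Cnorm2; destruct (v i); simpl; ring.
  - intros k _ Hki. unfold Id. destruct (Nat.eqb_spec i k); [lia|]. ring.
Qed.

Lemma Herm_madd n X Y : Herm n X -> Herm n Y -> Herm n (madd X Y).
Proof. intros H1 H2 i j Hi Hj. unfold madd. rewrite H1, H2, Cconj_add, ?Cconj_involutive; auto. Qed.
Lemma Herm_msub n X Y : Herm n X -> Herm n Y -> Herm n (msub X Y).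
Proof.
  intros H1 H2 i j Hi Hj. unfold msub.
  rewrite H1, H2, Cconj_add, Cconj_opp, ?Cconj_involutive; auto.
Qed.
Lemma Herm_mscale n t X : Herm n X -> Herm n (mscale t X).
Proof. intros H i j Hi Hj. unfold mscale. rewrite H, Cconj_mul, Cconj_RtoC, ?Cconj_involutive; auto. Qed.
Lemma Herm_Id n : Herm n (Id n).
Proof.
  intros i j _ _. unfold Id. rewrite Nat.eqb_sym.
  destruct (Nat.eqb j i); apply C_ext; simpl; ring.
Qed.
Lemma Herm_agree n X Y : agree n X Y -> Herm n X -> Herm n Y.
Proof. intros E H i j Hi Hj. rewrite <- !E by auto. apply H; auto. Qed.

Lemma PSD_intro n X : Herm n X -> (forall v, 0 <= Q n X v) -> PSD n X.
Proof. split; auto. Qed.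
Lemma PSD_Q n X v : PSD n X -> 0 <= Q n X v.
Proof. intros [_ H]; apply H. Qed.
Lemma PD_intro n X : Herm n X -> (forall v, 0 < vnorm2 n v -> 0 < Q n X v) -> PD n X.
Proof. intros H1 H2; split; auto. intros v Hv; apply H2, vnorm2_pos, Hv. Qed.
Lemma PD_Q n X v : PD n X -> 0 < vnorm2 n v -> 0 < Q n X v.
Proof. intros [_ H] Hv; apply H, vnorm2_pos, Hv. Qed.

Lemma PSD_agree n X Y : agree n X Y -> PSD n X -> PSD n Y.
Proof.
  intros E [H1 H2]. apply PSD_intro; [eapply Herm_agree; eauto|].
  intros v. rewrite <- (Q_ext n X Y); auto. apply H2.
Qed.
Lemma PD_PSD n X : PD n X -> PSD n X.
Proof.
  intros HX. apply PSD_intro; [apply HX|]. intros v.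
  destruct (vnorm2_nonneg n v) as [Hv|Hv]; [apply Rlt_le, PD_Q; auto|].
  unfold Q. rewrite qform_zero_vector; [simpl; lra|]. intros i Hi.
  apply NNPP; intros Hne. enough (0 < vnorm2 n v) by lra. apply vnorm2_pos; eauto.
Qed.
Lemma PSD_mscale n s X : 0 <= s -> PSD n X -> PSD n (mscale s X).
Proof.
  intros Hs HP. apply PSD_intro; [apply Herm_mscale, HP|]. intros v.
  rewrite Q_mscale. pose proof (PSD_Q n X v HP). nra.
Qed.
Lemma PD_Id n : PD n (Id n).
Proof. apply PD_intro; [apply Herm_Id|]. intros v Hv; rewrite Q_Id; auto. Qed.
Lemma PSD_add_scaled_Id_PD n Y e : PSD n Y -> 0 < e -> PD n (madd Y (mscale e (Id n))).
Proof.
  intros HY He. apply PD_intro; [apply Herm_madd; [apply HY|apply Herm_mscale, Herm_Id]|].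
  intros v Hv. rewrite Q_madd, Q_mscale, Q_Id. pose proof (PSD_Q n Y v HY). nra.
Qed.

Definition unit_vec (i : nat) (a : C) : nat -> C := fun k => if Nat.eqb k i then a else C0.
Definition pair_vec (i j : nat) (a b : C) : nat -> C :=
  fun k => if Nat.eqb k i then a else if Nat.eqb k j then b else C0.

Lemma qform_unit_vec n X i a : (i < n)%nat ->
  qform n X (unit_vec i a) = Cmul (Cmul (Cconj a) (X i i)) a.
Proof.
  intros Hi. unfold qform, unit_vec. rewrite (csum_single n _ i Hi).
  - rewrite (csum_single n _ i Hi); rewrite ?Nat.eqb_refl; auto.
    intros k _ Hk. destruct (Nat.eqb_spec k i); [lia|]. ring.
  - intros k _ Hk. destruct (Nat.eqb_spec k i); [lia|]. rewrite Cconj_C0.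
    apply csum_eq0; intros; ring.
Qed.
Lemma qform_pair_vec n X i j a b : (i < n)%nat -> (j < n)%nat -> i <> j ->
  qform n X (pair_vec i j a b) =
  Cadd (Cadd (Cmul (Cmul (Cconj a) (X i i)) a) (Cmul (Cmul (Cconj a) (X i j)) b))
       (Cadd (Cmul (Cmul (Cconj b) (X j i)) a) (Cmul (Cmul (Cconj b) (X j j)) b)).
Proof.
  intros Hi Hj Hij.
  assert (Ei : pair_vec i j a b i = a) by (unfold pair_vec; rewrite Nat.eqb_refl; auto).
  assert (Ej : pair_vec i j a b j = b).
  { unfold pair_vec. destruct (Nat.eqb_spec j i); [lia|]. rewrite Nat.eqb_refl; auto. }
  assert (Ek : forall k, k <> i -> k <> j -> pair_vec i j a b k = C0).
  { intros k H1 H2. unfold pair_vec.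
    destruct (Nat.eqb_spec k i), (Nat.eqb_spec k j); auto; lia. }
  unfold qform. rewrite (csum_pair n _ i j Hi Hj Hij).
  - rewrite !(csum_pair n _ i j Hi Hj Hij), Ei, Ej; auto.
    all: intros k _ H1 H2; rewrite (Ek k H1 H2); ring.
  - intros k _ H1 H2. rewrite Ek, Cconj_C0 by auto. apply csum_eq0; intros; ring.
Qed.

Lemma PSD_diag n X i : PSD n X -> (i < n)%nat -> 0 <= Cre (X i i) /\ Cim (X i i) = 0.
Proof.
  intros [H1 H2] Hi. split.
  - pose proof (H2 (unit_vec i C1)) as H. rewrite qform_unit_vec in H by auto.
    destruct (X i i); simpl in *; lra.
  - pose proof (H1 i i Hi Hi) as H. destruct (X i i); simpl in *. injection H; lra.
Qed.
(* Testing the form on [e_i + c e_j] for [c] = 1, -1, i, -i bounds both parts of [X i j]. *)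
Lemma PSD_offdiag n X i j : PSD n X -> (i < n)%nat -> (j < n)%nat ->
  Rabs (Cre (X i j)) <= (Cre (X i i) + Cre (X j j)) / 2 /\
  Rabs (Cim (X i j)) <= (Cre (X i i) + Cre (X j j)) / 2.
Proof.
  intros HP Hi Hj. destruct (Nat.eq_dec i j) as [<-|Hij].
  - destruct (PSD_diag n X i HP Hi) as [H0 ->]. rewrite Rabs_R0, Rabs_pos_eq; lra.
  - destruct HP as [H1 H2]. pose proof (H1 j i Hj Hi) as Hji.
    pose proof (H2 (pair_vec i j C1 C1)) as Q1. pose proof (H2 (pair_vec i j C1 (Copp C1))) as Q2.
    pose proof (H2 (pair_vec i j C1 (0, 1))) as Q3. pose proof (H2 (pair_vec i j C1 (0, -1))) as Q4.
    rewrite qform_pair_vec, Hji in Q1, Q2, Q3, Q4 by auto.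
    destruct (X i j) as [p q], (X i i) as [a b], (X j j) as [c d]. simpl in *.
    split; apply Rabs_le; split; lra.
Qed.
Lemma PSD_nonzero_diag n X : PSD n X -> nonzero n X -> exists i, (i < n)%nat /\ 0 < Cre (X i i).
Proof.
  intros HP [i [j [Hi [Hj Hne]]]].
  destruct (PSD_offdiag n X i j HP Hi Hj) as [Hre Him].
  destruct (PSD_diag n X i HP Hi), (PSD_diag n X j HP Hj).
  destruct (Rlt_dec 0 (Cre (X i i))); [eauto|]. destruct (Rlt_dec 0 (Cre (X j j))); [eauto|].
  exfalso; apply Hne. pose proof (Rabs_pos (Cre (X i j))); pose proof (Rabs_pos (Cim (X i j))).
  destruct (X i j) as [a b]; simpl in *. apply C_ext; simpl.
  - destruct (Req_dec a 0); auto. pose proof (Rabs_pos_lt a); lra.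
  - destruct (Req_dec b 0); auto. pose proof (Rabs_pos_lt b); lra.
Qed.

Lemma trace_mscale n s X : trace n (mscale s X) = Cmul (RtoC s) (trace n X).
Proof. apply csum_mull. Qed.
Lemma trace_Id n : trace n (Id n) = RtoC (INR n).
Proof.
  unfold trace. induction n; [apply C_ext; simpl; ring|]. simpl csum.
  rewrite (csum_ext n _ (fun i => Id n i i)), IHn by auto.
  unfold Id; rewrite Nat.eqb_refl, S_INR. apply C_ext; simpl; ring.
Qed.
Lemma PSD_trace n X : PSD n X ->
  trace n X = RtoC (rsum n (fun i => Cre (X i i))) /\ 0 <= rsum n (fun i => Cre (X i i)).
Proof.
  intros HP. split; [|apply rsum_nonneg; intros; apply (PSD_diag n X i HP); auto].
  apply C_ext; unfold trace; [apply Cre_csum|]. change (Cim (csum n (fun i => X i i)) = 0).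
  rewrite Cim_csum, <- (Rmult_0_r (INR n)), <- rsum_const. apply rsum_ext; intros i Hi.
  apply (PSD_diag n X i HP Hi).
Qed.

Lemma PSD1_PSD n X : PSD1 n X -> PSD n X.
Proof. intros [H _]; auto. Qed.
Lemma PSD1_diag_le n X i : PSD1 n X -> (i < n)%nat -> Cre (X i i) <= 1.
Proof.
  intros [HP HT] Hi. destruct (PSD_trace n X HP) as [Htr _]. rewrite HT in Htr.
  assert (E : rsum n (fun i => Cre (X i i)) = 1) by (injection Htr; auto).
  rewrite <- E. apply (rsum_single_le n (fun i => Cre (X i i))); auto.
  intros; apply (PSD_diag n X k HP); auto.
Qed.
Lemma PSD1_entry_bound n X i j : PSD1 n X -> (i < n)%nat -> (j < n)%nat ->
  Rabs (Cre (X i j)) <= 1 /\ Rabs (Cim (X i j)) <= 1.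
Proof.
  intros HP Hi Hj. pose proof (PSD1_diag_le n X i HP Hi). pose proof (PSD1_diag_le n X j HP Hj).
  destruct (PSD_offdiag n X i j (PSD1_PSD n X HP) Hi Hj). lra.
Qed.
Lemma PSD1_nonzero n X : PSD1 n X -> nonzero n X.
Proof.
  intros [HP HT]. apply NNPP; intros Hn.
  assert (trace n X = C0) by (apply csum_eq0; intros i Hi; apply NNPP; intros Hne; apply Hn; exists i, i; auto).
  rewrite HT in H. injection H; lra.
Qed.
Lemma PD_nonzero n X : (1 <= n)%nat -> PD n X -> nonzero n X.
Proof.
  intros Hn HX. exists 0%nat, 0%nat. do 2 (split; [lia|]). intros E.
  assert (H : 0 < Q n X (unit_vec 0 C1)).
  { apply PD_Q; auto. apply vnorm2_pos. exists 0%nat. split; [lia|].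
    unfold unit_vec; simpl. intros H; injection H; lra. }
  unfold Q in H. rewrite qform_unit_vec, E in H by lia. simpl in H; lra.
Qed.

Lemma PSD_normalize n X : PSD n X -> nonzero n X -> exists c, 0 < c /\ PSD1 n (mscale (/ c) X).
Proof.
  intros HP HZ. destruct (PSD_trace n X HP) as [Htr _].
  set (c := rsum n (fun i => Cre (X i i))) in Htr.
  assert (Hc : 0 < c).
  { destruct (PSD_nonzero_diag n X HP HZ) as [i [Hi Hpos]].
    eapply Rlt_le_trans; [apply Hpos|]. apply (rsum_single_le n (fun i => Cre (X i i))); auto.
    intros; apply (PSD_diag n X k HP); auto. }
  exists c. split; auto. split; [apply PSD_mscale; auto; left; apply Rinv_0_lt_compat; auto|].
  rewrite trace_mscale, Htr. apply C_ext; simpl; field; lra.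
Qed.
Lemma scaled_Id_PSD1 n : (1 <= n)%nat -> PSD1 n (mscale (/ INR n) (Id n)).
Proof.
  intros Hn. assert (0 < INR n) by (apply lt_0_INR; lia). split.
  - apply PSD_mscale; [left; apply Rinv_0_lt_compat; auto|apply PD_PSD, PD_Id].
  - rewrite trace_mscale, trace_Id. apply C_ext; simpl; field; lra.
Qed.

(** * Completely positive maps are positive and linear *)

(* [is_CP] only constrains Hermitian inputs and the m x m output block, hence [agree]. *)
Record positive_linear (n m : nat) (F : Map) : Prop := {
  pl_herm : forall X, Herm n X -> Herm m (F X);
  pl_agree : forall X Y, Herm n X -> agree n X Y -> agree m (F X) (F Y);
  pl_lin : forall X Y s t, Herm n X -> Herm n Y ->
    agree m (F (madd (mscale s X) (mscale t Y))) (madd (mscale s (F X)) (mscale t (F Y)));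
  pl_psd : forall X, PSD n X -> PSD m (F X) }.

Lemma positive_linear_zero n m : positive_linear n m (fun _ _ _ => C0).
Proof.
  constructor; try (intros; intros i j _ _; apply C_ext; simpl; ring).
  intros X _. apply PSD_intro; [intros i j _ _; apply C_ext; simpl; ring|].
  intros v. unfold Q. rewrite qform_zero_matrix. simpl; lra.
Qed.
Lemma positive_linear_add n m F G :
  positive_linear n m F -> positive_linear n m G -> positive_linear n m (map_add F G).
Proof.
  intros [F1 F2 F3 F4] [G1 G2 G3 G4]. unfold map_add. constructor.
  - intros; apply Herm_madd; auto.
  - intros X Y H E i j Hi Hj. unfold madd. rewrite (F2 X Y), (G2 X Y); auto.
  - intros X Y s t HX HY i j Hi Hj. unfold madd at 1. rewrite F3, G3; auto.
    unfold madd, mscale. ring.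
  - intros X H. apply PSD_intro; [apply Herm_madd; [apply F1|apply G1]; apply H|].
    intros v. rewrite Q_madd. pose proof (PSD_Q _ _ v (F4 X H)); pose proof (PSD_Q _ _ v (G4 X H)). lra.
Qed.

Lemma conjug_herm n T X i j : Herm n X -> conjug n T X i j = Cconj (conjug n T X j i).
Proof.
  intros H. unfold conjug. rewrite csum_conj, csum_swap. apply csum_ext; intros k Hk.
  rewrite csum_conj. apply csum_ext; intros l Hl. rewrite H by auto.
  rewrite !Cconj_mul, !Cconj_involutive. ring.
Qed.
Lemma csum_sandwich n a f b : Cmul (Cmul a (csum n f)) b = csum n (fun k => Cmul (Cmul a (f k)) b).
Proof. rewrite <- csum_mull, <- csum_mulr. reflexivity. Qed.
Lemma qform_conjug n m T X v :
  qform m (conjug n T X) v = qform n X (fun l => csum m (fun j => Cmul (Cconj (T j l)) (v j))).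
Proof.
  set (F := fun i j k l =>
    Cmul (Cmul (Cmul (T i k) (Cconj (v i))) (X k l)) (Cmul (Cconj (T j l)) (v j))).
  transitivity (csum m (fun i => csum m (fun j => csum n (fun k => csum n (fun l => F i j k l))))).
  { unfold qform, conjug. apply csum_ext; intros i _; apply csum_ext; intros j _.
    rewrite csum_sandwich. apply csum_ext; intros k _.
    rewrite csum_sandwich. apply csum_ext; intros l _. unfold F. ring. }
  transitivity (csum n (fun k => csum n (fun l => csum m (fun i => csum m (fun j => F i j k l))))).
  { transitivity (csum m (fun i => csum n (fun k => csum m (fun j => csum n (fun l => F i j k l))))).
    { apply csum_ext; intros i _. apply (csum_swap m n (fun j k => csum n (fun l => F i j k l))). }
    rewrite (csum_swap m n (fun i k => csum m (fun j => csum n (fun l => F i j k l)))).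
    apply csum_ext; intros k _.
    transitivity (csum m (fun i => csum n (fun l => csum m (fun j => F i j k l)))).
    { apply csum_ext; intros i _. apply (csum_swap m n (fun j l => F i j k l)). }
    apply (csum_swap m n (fun i l => csum m (fun j => F i j k l))). }
  unfold qform. apply csum_ext; intros k _; apply csum_ext; intros l _.
  rewrite csum_conj, <- csum_mulr, <- csum_mulr. apply csum_ext; intros i _.
  rewrite <- csum_mull. apply csum_ext; intros j _.
  unfold F. rewrite Cconj_mul, Cconj_involutive. ring.
Qed.
Lemma positive_linear_conjug n m T : positive_linear n m (conjug n T).
Proof.
  constructor.
  - intros X H i j _ _. apply conjug_herm; auto.
  - intros X Y _ E i j _ _. unfold conjug.
    apply csum_ext; intros k Hk; apply csum_ext; intros l Hl. rewrite E; auto.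
  - intros X Y s t _ _ i j _ _. unfold conjug, madd, mscale.
    rewrite <- !csum_mull, <- csum_add. apply csum_ext; intros k _.
    rewrite <- !csum_mull, <- csum_add. apply csum_ext; intros l _. ring.
  - intros X H. apply PSD_intro; [intros i j _ _; apply conjug_herm, H|].
    intros v. unfold Q. rewrite qform_conjug. apply H.
Qed.

Lemma positive_linear_kraus_sum n m Ts : positive_linear n m (kraus_sum n Ts).
Proof.
  induction Ts as [|T Ts IH]; [apply positive_linear_zero|].
  apply (positive_linear_add n m (conjug n T) (kraus_sum n Ts)); auto.
  apply positive_linear_conjug.
Qed.

Lemma CP_positive_linear n m F : is_CP n m F -> positive_linear n m F.
Proof.
  intros [Ts HT]. destruct (positive_linear_kraus_sum n m Ts) as [K1 K2 K3 K4].
  assert (E : forall X, Herm n X -> agree m (kraus_sum n Ts X) (F X)).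
  { intros X H i j Hi Hj. rewrite HT; auto. }
  constructor.
  - intros X H. apply (Herm_agree m (kraus_sum n Ts X)); auto.
  - intros X Y H EXY i j Hi Hj. rewrite <- !E; auto; [apply K2; auto|eapply Herm_agree; eauto].
  - intros X Y s t HX HY i j Hi Hj.
    rewrite <- E, K3 by (auto; apply Herm_madd; apply Herm_mscale; auto).
    unfold madd, mscale. rewrite !E; auto.
  - intros X H. apply (PSD_agree m (kraus_sum n Ts X)); [apply E, H|auto].
Qed.

Section PositiveLinear.
Variables (n m : nat) (F : Map).
Hypothesis HF : positive_linear n m F.

Lemma pl_Q_lincomb X Y s t v : Herm n X -> Herm n Y ->
  Q m (F (madd (mscale s X) (mscale t Y))) v = s * Q m (F X) v + t * Q m (F Y) v.
Proof. intros HX HY. rewrite (Q_ext m _ _ v (pl_lin _ _ _ HF X Y s t HX HY)), Q_madd, !Q_mscale; auto. Qed.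

Lemma pl_Q_agree X Y v : Herm n X -> agree n X Y -> Q m (F X) v = Q m (F Y) v.
Proof. intros HX E. apply Q_ext, (pl_agree _ _ _ HF); auto. Qed.

Lemma pl_Q_scale X s v : Herm n X -> Q m (F (mscale s X)) v = s * Q m (F X) v.
Proof.
  intros HX. rewrite (pl_Q_agree _ (madd (mscale s X) (mscale 0 X))), pl_Q_lincomb by
    (auto; try apply Herm_mscale; auto; intros i j _ _; unfold madd, mscale; apply C_ext; simpl; ring).
  ring.
Qed.
Lemma pl_Q_add X Y v : Herm n X -> Herm n Y -> Q m (F (madd X Y)) v = Q m (F X) v + Q m (F Y) v.
Proof.
  intros HX HY. rewrite (pl_Q_agree _ (madd (mscale 1 X) (mscale 1 Y))), pl_Q_lincomb by
    (auto; try apply Herm_madd; auto; intros i j _ _; unfold madd, mscale; apply C_ext; simpl; ring).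
  ring.
Qed.
Lemma pl_Q_le X Y v : Herm n X -> Herm n Y -> PSD n (msub Y X) -> Q m (F X) v <= Q m (F Y) v.
Proof.
  intros HX HY H. pose proof (PSD_Q _ _ v (pl_psd _ _ _ HF _ H)) as Hv.
  rewrite (pl_Q_agree _ (madd (mscale 1 Y) (mscale (-1) X))), pl_Q_lincomb in Hv by
    (auto; try apply Herm_msub; auto; intros i j _ _; unfold madd, msub, mscale; apply C_ext; simpl; ring).
  lra.
Qed.

End PositiveLinear.

Definition entry_norm (n : nat) (M : Mat) : R :=
  rsum n (fun i => rsum n (fun j => Rabs (Cre (M i j)) + Rabs (Cim (M i j)))).

Lemma entry_norm_nonneg n M : 0 <= entry_norm n M.
Proof.
  apply rsum_nonneg; intros; apply rsum_nonneg; intros.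
  pose proof (Rabs_pos (Cre (M i i0))); pose proof (Rabs_pos (Cim (M i i0))); lra.
Qed.

Lemma Rabs_bilinear_le x y u w : Rabs (x * u + y * w) <= (x * x + y * y + (u * u + w * w)) / 2.
Proof.
  pose proof (Rle_0_sqr (x - u)); pose proof (Rle_0_sqr (y - w)).
  pose proof (Rle_0_sqr (x + u)); pose proof (Rle_0_sqr (y + w)).
  unfold Rsqr in *. apply Rabs_le; split; lra.
Qed.

Lemma Cre_sandwich_le (a z b : C) :
  Rabs (Cre (Cmul (Cmul (Cconj a) z) b)) <= (Rabs (Cre z) + Rabs (Cim z)) * ((Cnorm2 a + Cnorm2 b) / 2).
Proof.
  destruct a as [a1 a2], z as [z1 z2], b as [b1 b2]. unfold Cnorm2; simpl.
  replace ((a1 * z1 - - a2 * z2) * b1 - (a1 * z2 + - a2 * z1) * b2)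
    with (z1 * (a1 * b1 + a2 * b2) + z2 * (a2 * b1 + - a1 * b2)) by ring.
  pose proof (Rabs_bilinear_le a1 a2 b1 b2). pose proof (Rabs_bilinear_le a2 (- a1) b1 b2).
  eapply Rle_trans; [apply Rabs_triang|]. rewrite !Rabs_mult.
  pose proof (Rabs_pos z1); pose proof (Rabs_pos z2). nra.
Qed.

Lemma Q_le_entry_norm n M v : Rabs (Q n M v) <= entry_norm n M * vnorm2 n v.
Proof.
  unfold Q, qform, entry_norm. rewrite Cre_csum, Rmult_comm, <- rsum_scal.
  eapply Rle_trans; [apply Rabs_rsum|]. apply rsum_le; intros i Hi.
  rewrite Cre_csum, <- rsum_scal. eapply Rle_trans; [apply Rabs_rsum|]. apply rsum_le; intros j Hj.
  eapply Rle_trans; [apply Cre_sandwich_le|].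
  pose proof (Cnorm2_le_vnorm2 n v i Hi); pose proof (Cnorm2_le_vnorm2 n v j Hj).
  pose proof (Rabs_pos (Cre (M i j))); pose proof (Rabs_pos (Cim (M i j))). nra.
Qed.

Lemma Q_entry_norm_bounds n M v :
  - (entry_norm n M * vnorm2 n v) <= Q n M v <= entry_norm n M * vnorm2 n v.
Proof. pose proof (Q_le_entry_norm n M v) as H. unfold Rabs in H. destruct Rcase_abs; lra. Qed.

(* Entries of a density matrix have modulus at most 1, hence [X <= 2 n^2 I]. *)
Definition density_bound (n : nat) : R := 2 * INR n * INR n.

Lemma density_bound_nonneg n : 0 <= density_bound n.
Proof. unfold density_bound. pose proof (pos_INR n). nra. Qed.

Lemma PSD1_le_density_bound n X : PSD1 n X -> PSD n (msub (mscale (density_bound n) (Id n)) X).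
Proof.
  intros H. apply PSD_intro; [apply Herm_msub; [apply Herm_mscale, Herm_Id|apply H]|].
  intros v. rewrite Q_msub, Q_mscale, Q_Id.
  assert (entry_norm n X <= density_bound n).
  { unfold entry_norm, density_bound.
    replace (2 * INR n * INR n) with (rsum n (fun _ => rsum n (fun _ => 2)))
      by (rewrite !rsum_const; ring).
    apply rsum_le; intros i Hi; apply rsum_le; intros j Hj.
    destruct (PSD1_entry_bound n X i j H Hi Hj). lra. }
  pose proof (Q_entry_norm_bounds n X v). pose proof (vnorm2_nonneg n v). nra.
Qed.

Lemma pl_Q_PSD1_le n m F X v : positive_linear n m F -> PSD1 n X ->
  Q m (F X) v <= density_bound n * entry_norm m (F (Id n)) * vnorm2 m v.
Proof.
  intros HF HX.
  eapply Rle_trans; [apply (pl_Q_le n m F HF X (mscale (density_bound n) (Id n)))|].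
  - apply HX.
  - apply Herm_mscale, Herm_Id.
  - apply PSD1_le_density_bound; auto.
  - rewrite (pl_Q_scale n m F) by (auto; apply Herm_Id). rewrite Rmult_assoc.
    apply Rmult_le_compat_l; [apply density_bound_nonneg|].
    apply Q_entry_norm_bounds.
Qed.

(** * Sequences and compactness *)

Lemma Un_cv_const c : Un_cv (fun _ => c) c.
Proof. intros eps He; exists 0%nat; intros; unfold Rdist; rewrite Rminus_diag, Rabs_R0; auto. Qed.

Lemma Un_cv_inv_succ : Un_cv (fun k => / INR (S k)) 0.
Proof.
  intros eps He. destruct (archimed_cor1 eps He) as [N [HN1 HN2]]. exists N. intros k Hk.
  unfold Rdist. rewrite Rminus_0_r, Rabs_pos_eq by (left; apply Rinv_0_lt_compat, lt_0_INR; lia).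
  eapply Rle_lt_trans; [|apply HN1].
  apply Rinv_le_contravar; [apply lt_0_INR; lia|apply le_INR; lia].
Qed.

Definition strict_incr (phi : nat -> nat) : Prop := forall k, (phi k < phi (S k))%nat.

Lemma strict_incr_ge phi : strict_incr phi -> forall k, (k <= phi k)%nat.
Proof. intros H k. induction k; [lia|]. specialize (H k). lia. Qed.
Lemma strict_incr_comp phi psi : strict_incr phi -> strict_incr psi -> strict_incr (fun k => phi (psi k)).
Proof.
  intros H1 H2 k.
  assert (Hmono : forall a b, (a < b)%nat -> (phi a < phi b)%nat).
  { intros a b Hab. induction Hab; [apply H1|]. specialize (H1 m). lia. }
  apply Hmono, H2.
Qed.
Lemma Un_cv_subseq u l phi : (forall k, (k <= phi k)%nat) -> Un_cv u l -> Un_cv (fun k => u (phi k)) l.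
Proof.
  intros H Hu eps He. destruct (Hu eps He) as [N HN]. exists N. intros k Hk.
  apply HN. specialize (H k). lia.
Qed.

Lemma Un_cv_of_dist_le_inv_succ u l : (forall k, Rabs (u k - l) < / INR (S k)) -> Un_cv u l.
Proof.
  intros H eps He. destruct (Un_cv_inv_succ eps He) as [N HN]. exists N. intros k Hk.
  specialize (HN k Hk). unfold Rdist in *. rewrite Rminus_0_r, Rabs_pos_eq in HN
    by (left; apply Rinv_0_lt_compat, lt_0_INR; lia).
  specialize (H k). lra.
Qed.

(* Turns the cluster point given by [Bolzano_Weierstrass] into a convergent subsequence. *)
Lemma bounded_cv_subseq (u : nat -> R) M : (forall k, Rabs (u k) <= M) ->
  exists phi, strict_incr phi /\ exists l, Un_cv (fun k => u (phi k)) l.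
Proof.
  intros HM.
  destruct (Bolzano_Weierstrass u (fun c => - M <= c <= M) (compact_P3 (- M) M)) as [l Hl].
  { intros k. specialize (HM k). unfold Rabs in HM. destruct Rcase_abs; lra. }
  assert (Hg : forall Nk : nat * nat,
    exists p, (fst Nk <= p)%nat /\ Rabs (u p - l) < / INR (S (snd Nk))).
  { intros [N k]. assert (Hp : 0 < / INR (S k)) by (apply Rinv_0_lt_compat, lt_0_INR; lia).
    destruct (Hl (disc l (mkposreal _ Hp)) N) as [p [Hp1 Hp2]]; eauto.
    exists (mkposreal _ Hp); intros y Hy; auto. }
  destruct (choice _ Hg) as [g Hg'].
  set (phi := fix f k := match k with O => g (0, 0)%nat | S k' => g (S (f k'), S k') end).
  exists phi. split.
  - intros k. simpl. destruct (Hg' (S (phi k), S k)). simpl in *; lia.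
  - exists l. apply Un_cv_of_dist_le_inv_succ. intros [|k]; apply (Hg' (_, _)).
Qed.

Lemma bounded_family_cv_subseq (I : Type) (l : list I) (u : nat -> I -> R) M :
  (forall k i, In i l -> Rabs (u k i) <= M) ->
  exists phi, strict_incr phi /\
    exists L : I -> R, forall i, In i l -> Un_cv (fun k => u (phi k) i) (L i).
Proof.
  induction l as [|a l IH]; intros HM.
  - exists (fun k => k). split; [intros k; lia|]. exists (fun _ => 0). intros i [].
  - destruct IH as [phi [Hphi [L HL]]]; [intros; apply HM; simpl; auto|].
    destruct (bounded_cv_subseq (fun k => u (phi k) a) M) as [psi [Hpsi [la Hla]]];
      [intros; apply HM; simpl; auto|].
    exists (fun k => phi (psi k)). split; [apply strict_incr_comp; auto|].
    exists (fun i => if excluded_middle_informative (i = a) then la else L i).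
    intros i Hi. destruct excluded_middle_informative as [->|Hne]; auto.
    destruct Hi as [->|Hi]; [congruence|].
    apply (Un_cv_subseq (fun k => u (phi k) i)); auto using strict_incr_ge.
Qed.

Definition Ccv (u : nat -> C) (z : C) : Prop :=
  Un_cv (fun k => Cre (u k)) (Cre z) /\ Un_cv (fun k => Cim (u k)) (Cim z).

Lemma Ccv_const z : Ccv (fun _ => z) z.
Proof. split; apply Un_cv_const. Qed.
Lemma Ccv_ext u w z : (forall k, u k = w k) -> Ccv w z -> Ccv u z.
Proof. intros H [H1 H2]. split; eapply Un_cv_ext; eauto; intros; simpl; rewrite H; auto. Qed.
Lemma Ccv_add u v a b : Ccv u a -> Ccv v b -> Ccv (fun k => Cadd (u k) (v k)) (Cadd a b).
Proof. intros [H1 H2] [H3 H4]. split; simpl; apply CV_plus; auto. Qed.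
Lemma Ccv_mul u v a b : Ccv u a -> Ccv v b -> Ccv (fun k => Cmul (u k) (v k)) (Cmul a b).
Proof.
  intros [H1 H2] [H3 H4]. split; simpl.
  - apply CV_minus; apply CV_mult; auto.
  - apply CV_plus; apply CV_mult; auto.
Qed.
Lemma Ccv_conj u a : Ccv u a -> Ccv (fun k => Cconj (u k)) (Cconj a).
Proof. intros [H1 H2]. split; simpl; auto. apply CV_opp; auto. Qed.
Lemma Ccv_csum n (f : nat -> nat -> C) g :
  (forall i, (i < n)%nat -> Ccv (fun k => f k i) (g i)) -> Ccv (fun k => csum n (f k)) (csum n g).
Proof.
  induction n; intros H; simpl; [apply Ccv_const|].
  apply Ccv_add; [apply IHn; intros|]; apply H; lia.
Qed.
Lemma rsum_cv n (f : nat -> nat -> R) g : (forall i, (i < n)%nat -> Un_cv (fun k => f k i) (g i)) ->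
  Un_cv (fun k => rsum n (f k)) (rsum n g).
Proof.
  induction n; intros H; simpl; [apply Un_cv_const|].
  apply CV_plus; [apply IHn; intros|]; apply H; lia.
Qed.
Lemma Ccv_unique u a b : Ccv u a -> Ccv u b -> a = b.
Proof. intros [H1 H2] [H3 H4]. apply C_ext; eapply UL_sequence; eauto. Qed.

Definition Mcv (n : nat) (M : nat -> Mat) (M0 : Mat) : Prop :=
  forall i j, (i < n)%nat -> (j < n)%nat -> Ccv (fun k => M k i j) (M0 i j).

Lemma Mcv_bounded_subseq n (M : nat -> Mat) b :
  (forall k i j, (i < n)%nat -> (j < n)%nat ->
     Rabs (Cre (M k i j)) <= b /\ Rabs (Cim (M k i j)) <= b) ->
  exists phi, strict_incr phi /\ exists L, Mcv n (fun k => M (phi k)) L.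
Proof.
  intros HM.
  set (idx := list_prod (list_prod (seq 0 n) (seq 0 n)) (true :: false :: nil)).
  set (coord := fun (X : Mat) (p : nat * nat * bool) =>
    let '(i, j, re) := p in if re then Cre (X i j) else Cim (X i j)).
  assert (Hidx : forall i j re, (i < n)%nat -> (j < n)%nat -> In (i, j, re) idx).
  { intros i j re Hi Hj. apply in_prod; [apply in_prod; apply in_seq; lia|destruct re; simpl; auto]. }
  destruct (bounded_family_cv_subseq _ idx (fun k => coord (M k)) b) as [phi [Hphi [L HL]]].
  { intros k [[i j] re] Hin. apply in_prod_iff in Hin as [Hin _].
    apply in_prod_iff in Hin as [Hi Hj]. apply in_seq in Hi, Hj.
    destruct (HM k i j) as [H1 H2]; try lia. destruct re; auto. }
  exists phi. split; auto. exists (fun i j => (L (i, j, true), L (i, j, false))).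
  intros i j Hi Hj. split; [apply (HL (i, j, true))|apply (HL (i, j, false))]; auto.
Qed.

Lemma Q_cv n M M0 v v0 : Mcv n M M0 -> (forall i, (i < n)%nat -> Ccv (fun k => v k i) (v0 i)) ->
  Un_cv (fun k => Q n (M k) (v k)) (Q n M0 v0).
Proof.
  intros HM Hv. unfold Q, qform.
  apply (Ccv_csum n (fun k i => csum n (fun j => Cmul (Cmul (Cconj (v k i)) (M k i j)) (v k j)))).
  intros i Hi. apply Ccv_csum. intros j Hj.
  apply Ccv_mul; [apply Ccv_mul; [apply Ccv_conj|apply HM]|]; auto.
Qed.
Lemma vnorm2_cv n v v0 : (forall i, (i < n)%nat -> Ccv (fun k => v k i) (v0 i)) ->
  Un_cv (fun k => vnorm2 n (v k)) (vnorm2 n v0).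
Proof.
  intros Hv. unfold vnorm2. induction n; simpl; [apply Un_cv_const|].
  apply CV_plus; [apply IHn; intros; apply Hv; lia|].
  destruct (Hv n (le_n _)). unfold Cnorm2. apply CV_plus; apply CV_mult; auto.
Qed.

Lemma PSD_closed n M M0 : (forall k, PSD n (M k)) -> Mcv n M M0 -> PSD n M0.
Proof.
  intros HP HM. apply PSD_intro.
  - intros i j Hi Hj. apply (Ccv_unique (fun k => M k i j)); auto.
    apply Ccv_ext with (fun k => Cconj (M k j i)); [intros k; apply (HP k); auto|].
    apply Ccv_conj; auto.
  - intros v. apply (@Rle_cv_lim (fun _ => 0) (fun k => Q n (M k) v)); [|apply Un_cv_const|].
    + intros k; apply PSD_Q, HP.
    + apply Q_cv; auto. intros; apply Ccv_const.
Qed.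

Lemma PSD1_cv_subseq n X : (forall k, PSD1 n (X k)) ->
  exists phi, strict_incr phi /\ exists Y, PSD1 n Y /\ Mcv n (fun k => X (phi k)) Y.
Proof.
  intros HX. destruct (Mcv_bounded_subseq n X 1) as [phi [Hphi [Y HY]]].
  { intros k i j Hi Hj. apply (PSD1_entry_bound n); auto. }
  exists phi. split; auto. exists Y. split; auto. split.
  - apply (PSD_closed n (fun k => X (phi k))); auto. intros; apply HX.
  - apply (Ccv_unique (fun k => trace n (X (phi k)))).
    + apply (Ccv_csum n (fun k i => X (phi k) i i)). intros; apply HY; auto.
    + apply Ccv_ext with (fun _ => C1); [intros; apply HX|apply Ccv_const].
Qed.

Lemma CP_cv n m F X Y : is_CP n m F -> (forall k, Herm n (X k)) -> Herm n Y -> Mcv n X Y ->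
  Mcv m (fun k => F (X k)) (F Y).
Proof.
  intros [Ts HT] HX HY H i j Hi Hj. rewrite HT by auto.
  apply Ccv_ext with (fun k => kraus_sum n Ts (X k) i j); [intros; rewrite HT; auto|].
  clear HT. induction Ts as [|T Ts IH]; simpl; [apply Ccv_const|].
  apply Ccv_add; auto. unfold conjug.
  apply (Ccv_csum n (fun k a => csum n (fun b => Cmul (Cmul (T i a) (X k a b)) (Cconj (T j b))))).
  intros a Ha. apply (Ccv_csum n (fun k b => Cmul (Cmul (T i a) (X k a b)) (Cconj (T j b)))).
  intros b Hb. apply Ccv_mul; [apply Ccv_mul; [apply Ccv_const|apply H; auto]|apply Ccv_const].
Qed.

Lemma normalize_vector m P v : 0 < vnorm2 m v ->
  exists w, vnorm2 m w = 1 /\ Q m P v = vnorm2 m v * Q m P w.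
Proof.
  intros Hv. exists (fun i => Cmul (RtoC (/ sqrt (vnorm2 m v))) (v i)).
  rewrite Q_vscale, vnorm2_vscale, <- Rinv_mult, sqrt_sqrt by lra.
  split; field; lra.
Qed.

(* By compactness of the unit sphere: a minimizing sequence of unit vectors would
   converge to a unit vector [w] with [Q P w <= 0]. *)
Lemma PD_coercive m P : PD m P -> exists c, 0 < c /\ forall v, c * vnorm2 m v <= Q m P v.
Proof.
  intros HP. apply NNPP; intros Hne.
  assert (Hk : forall k : nat, exists w, vnorm2 m w = 1 /\ Q m P w < / INR (S k)).
  { intros k. assert (Hpos : 0 < / INR (S k)) by (apply Rinv_0_lt_compat, lt_0_INR; lia).
    apply NNPP; intros Hk. apply Hne. exists (/ INR (S k)). split; auto. intros v.
    destruct (vnorm2_nonneg m v) as [Hv|Hv].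
    - destruct (normalize_vector m P v Hv) as [w [Hw ->]].
      rewrite Rmult_comm. apply Rmult_le_compat_l; [lra|].
      apply Rnot_lt_le; intros Hlt; apply Hk; eauto.
    - rewrite <- Hv, Rmult_0_r. apply PSD_Q, PD_PSD, HP. }
  destruct (choice _ Hk) as [w Hw].
  destruct (Mcv_bounded_subseq m (fun k i _ => w k i) 1) as [phi [Hphi [L HL]]].
  { intros k i j Hi _. pose proof (Cnorm2_le_vnorm2 m (w k) i Hi) as H.
    rewrite (proj1 (Hw k)) in H. unfold Cnorm2 in H.
    split; apply Rabs_le; split; nra. }
  set (w0 := fun i => L i i).
  assert (Hcv : forall i, (i < m)%nat -> Ccv (fun k => w (phi k) i) (w0 i)) by (intros; apply HL; auto).
  assert (Hunit : vnorm2 m w0 = 1).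
  { apply (UL_sequence (fun k => vnorm2 m (w (phi k)))); [apply vnorm2_cv; auto|].
    apply (Un_cv_ext (fun _ => 1)); [intros; symmetry; apply Hw|apply Un_cv_const]. }
  assert (Hle : Q m P w0 <= 0).
  { apply (@Rle_cv_lim (fun k => Q m P (w (phi k))) (fun k => / INR (S (phi k)))).
    - intros k; apply Rlt_le, Hw.
    - apply (Q_cv m (fun _ => P)); auto. intros i j _ _; apply Ccv_const.
    - apply (Un_cv_subseq (fun k => / INR (S k))); auto using strict_incr_ge, Un_cv_inv_succ. }
  assert (0 < Q m P w0) by (apply PD_Q; auto; lra). lra.
Qed.

Lemma pl_PD_of_PD_image_Id n m F X : positive_linear n m F -> PD m (F (Id n)) -> PD n X -> PD m (F X).
Proof.
  intros HF HFI HX. destruct (PD_coercive n X HX) as [s [Hs HsQ]].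
  apply PD_intro; [apply (pl_herm _ _ _ HF), HX|]. intros v Hv.
  assert (Hle : Q m (F (mscale s (Id n))) v <= Q m (F X) v).
  { apply (pl_Q_le n m F HF); [apply Herm_mscale, Herm_Id|apply HX|].
    apply PSD_intro; [apply Herm_msub; [apply HX|apply Herm_mscale, Herm_Id]|].
    intros w. rewrite Q_msub, Q_mscale, Q_Id. specialize (HsQ w). lra. }
  rewrite (pl_Q_scale n m F HF) in Hle by apply Herm_Id.
  pose proof (PD_Q m _ v HFI Hv). nra.
Qed.

Lemma ERle_refl a : ERle a a.
Proof. destruct a; simpl; auto; lra. Qed.
Lemma ERle_Inf a : ERle a Inf.
Proof. destruct a; exact I. Qed.
Lemma ERle_trans a b c : ERle a b -> ERle b c -> ERle a c.
Proof. destruct a, b, c; simpl; auto; try lra; tauto. Qed.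
Lemma ERle_antisym a b : ERle a b -> ERle b a -> a = b.
Proof. destruct a, b; simpl; try tauto. intros; f_equal; lra. Qed.
Lemma ERle_Fin_eps a p : (forall d, 0 < d -> ERle a (Fin (p + d))) -> ERle a (Fin p).
Proof.
  intros H. destruct a as [a|]; simpl.
  - apply Rnot_lt_le; intros Hl. specialize (H ((a - p) / 2) ltac:(lra)). simpl in H. lra.
  - apply (H 1); lra.
Qed.

Definition ER_nonneg_set (S : ER -> Prop) : Prop := forall e, S e -> ERle (Fin 0) e.

Lemma glb_exists S : ER_nonneg_set S -> exists v, is_glb S v.
Proof.
  intros H0. destruct (classic (exists x, S (Fin x))) as [[x Hx]|Hno].
  - destruct (completeness (fun y => S (Fin (- y)))) as [s [Hs1 Hs2]].
    + exists 0. intros y Hy. specialize (H0 _ Hy). simpl in H0. lra.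
    + exists (- x). rewrite Ropp_involutive; auto.
    + exists (Fin (- s)). split.
      * intros [y|] Hy; simpl; auto. enough (- y <= s) by lra.
        apply Hs1. rewrite Ropp_involutive; auto.
      * intros [a|] Ha; simpl; [|apply (Ha _ Hx)].
        enough (s <= - a) by lra. apply Hs2. intros y Hy. specialize (Ha _ Hy). simpl in Ha. lra.
  - exists Inf. split.
    + intros [y|] Hy; simpl; auto. apply Hno; eauto.
    + intros [w|] _; simpl; auto.
Qed.

Section Infimum.
Variable S : ER -> Prop.
Hypothesis HS : ER_nonneg_set S.

Lemma einf_glb : is_glb S (einf S).
Proof. unfold einf. apply epsilon_spec, glb_exists, HS. Qed.
Lemma einf_le e : S e -> ERle (einf S) e.
Proof. apply einf_glb. Qed.
Lemma einf_greatest w : (forall e, S e -> ERle w e) -> ERle w (einf S).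
Proof. apply einf_glb. Qed.
Lemma einf_lt x q : ERle (einf S) (Fin x) -> x < q -> exists y, S (Fin y) /\ y < q.
Proof.
  intros Hx Hq. apply NNPP; intros Hn.
  enough (ERle (Fin q) (einf S)) as H by (pose proof (ERle_trans _ _ _ H Hx); simpl in *; lra).
  apply einf_greatest. intros [y|] Hy; simpl; auto.
  apply Rnot_lt_le; intros Hl; apply Hn; eauto.
Qed.

End Infimum.

Lemma einf_mono S S' : ER_nonneg_set S -> ER_nonneg_set S' ->
  (forall e, S e -> exists e', S' e' /\ ERle e' e) -> ERle (einf S') (einf S).
Proof.
  intros H H' Hm. apply einf_greatest; auto. intros e He.
  destruct (Hm e He) as [e' [He' Hle]]. eapply ERle_trans; [apply einf_le|]; eauto.
Qed.

Implicit Types (A B F G : Map) (X Y : Mat) (v : nat -> C).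

Definition feasible (m : nat) (A B : Map) (X : Mat) (t : R) : Prop :=
  0 <= t /\ PSD m (msub (mscale t (B X)) (A X)).

Lemma feasible_Q m A B X t v : feasible m A B X t -> Q m (A X) v <= t * Q m (B X) v.
Proof. intros [_ H]. pose proof (PSD_Q _ _ v H) as Hv. rewrite Q_msub, Q_mscale in Hv. lra. Qed.

Lemma feasible_Q_le m A B X t s v : feasible m A B X t -> t <= s -> 0 <= Q m (B X) v ->
  Q m (A X) v <= s * Q m (B X) v.
Proof.
  intros Hf Hts HB. pose proof (feasible_Q _ _ _ _ _ v Hf).
  assert (t * Q m (B X) v <= s * Q m (B X) v) by (apply Rmult_le_compat_r; auto). lra.
Qed.

Lemma feasible_intro n m A B X t : positive_linear n m A -> positive_linear n m B -> Herm n X ->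
  0 <= t -> (forall v, Q m (A X) v <= t * Q m (B X) v) -> feasible m A B X t.
Proof.
  intros HA HB HX Ht H. split; auto. apply PSD_intro.
  - apply Herm_msub; [apply Herm_mscale; apply (pl_herm _ _ _ HB)|apply (pl_herm _ _ _ HA)]; auto.
  - intros v. rewrite Q_msub, Q_mscale. specialize (H v). lra.
Qed.

Lemma feasible_scale n m A B X t s : positive_linear n m A -> positive_linear n m B -> Herm n X ->
  0 < s -> feasible m A B X t -> feasible m A B (mscale s X) t.
Proof.
  intros HA HB HX Hs H. apply (feasible_intro n); auto; [apply Herm_mscale; auto|apply H|].
  intros v. rewrite (pl_Q_scale n m A), (pl_Q_scale n m B); auto.
  pose proof (feasible_Q _ _ _ _ _ v H). nra.
Qed.

Lemma feasible_normalize n m A B X t : positive_linear n m A -> positive_linear n m B ->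
  PSD n X -> nonzero n X -> feasible m A B X t -> exists X', PSD1 n X' /\ feasible m A B X' t.
Proof.
  intros HA HB HX HZ H. destruct (PSD_normalize n X HX HZ) as [c [Hc HX1]].
  exists (mscale (/ c) X). split; auto. apply (feasible_scale n); auto; [apply HX|].
  apply Rinv_0_lt_compat; auto.
Qed.

Lemma r_val_set_nonneg m A B X :
  ER_nonneg_set (fun e => exists t, e = Fin t /\ 0 <= t /\ PSD m (msub (mscale t (B X)) (A X))).
Proof. intros e [t [-> [H _]]]; simpl; auto. Qed.
Lemma r_val_nonneg m A B X : ERle (Fin 0) (r_val m A B X).
Proof. apply einf_greatest; apply r_val_set_nonneg. Qed.
Lemma r_val_le m A B X t : feasible m A B X t -> ERle (r_val m A B X) (Fin t).
Proof. intros [H1 H2]. apply einf_le; [apply r_val_set_nonneg|]. exists t; auto. Qed.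
Lemma r_val_lt m A B X x q : ERle (r_val m A B X) (Fin x) -> x < q ->
  exists t, feasible m A B X t /\ t < q.
Proof.
  intros H Hq. destruct (einf_lt _ (r_val_set_nonneg m A B X) x q H Hq) as [y [[t [E Ht]] Hy]].
  injection E as ->. exists t; split; auto.
Qed.

Lemma rho_set_nonneg n m A B : ER_nonneg_set (fun e => exists X, PD n X /\ e = r_val m A B X).
Proof. intros e [X [_ ->]]. apply r_val_nonneg. Qed.
Lemma rhohat_set_nonneg n m A B :
  ER_nonneg_set (fun e => exists X, PSD n X /\ nonzero n X /\ e = r_val m A B X).
Proof. intros e [X [_ [_ ->]]]. apply r_val_nonneg. Qed.

Lemma rho_le n m A B X : PD n X -> ERle (rho n m A B) (r_val m A B X).
Proof. intros H. apply einf_le; [apply rho_set_nonneg|eauto]. Qed.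
Lemma rhohat_le n m A B X : PSD n X -> nonzero n X -> ERle (rhohat n m A B) (r_val m A B X).
Proof. intros H H'. apply einf_le; [apply rhohat_set_nonneg|eauto]. Qed.
Lemma rhohat_nonneg n m A B : ERle (Fin 0) (rhohat n m A B).
Proof. apply einf_greatest; apply rhohat_set_nonneg. Qed.

Lemma rho_lt n m A B x q : ERle (rho n m A B) (Fin x) -> x < q ->
  exists X t, PD n X /\ feasible m A B X t /\ t < q.
Proof.
  intros H Hq. destruct (einf_lt _ (rho_set_nonneg n m A B) x q H Hq) as [y [[X [HX E]] Hy]].
  destruct (r_val_lt m A B X y q) as [t [Ht Htq]]; [rewrite <- E; simpl; lra|auto|eauto].
Qed.
Lemma rhohat_lt n m A B x q : positive_linear n m A -> positive_linear n m B ->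
  ERle (rhohat n m A B) (Fin x) -> x < q -> exists X t, PSD1 n X /\ feasible m A B X t /\ t < q.
Proof.
  intros HA HB H Hq.
  destruct (einf_lt _ (rhohat_set_nonneg n m A B) x q H Hq) as [y [[X [HX [HZ E]]] Hy]].
  destruct (r_val_lt m A B X y q) as [t [Ht Htq]]; [rewrite <- E; simpl; lra|auto|].
  destruct (feasible_normalize n m A B X t) as [X' [HX' Hf]]; eauto.
Qed.

(** * Parts (1) and (2): comparisons *)

Lemma rhohat_le_rho n m A B : (1 <= n)%nat -> ERle (rhohat n m A B) (rho n m A B).
Proof.
  intros Hn. apply einf_mono; [apply rho_set_nonneg|apply rhohat_set_nonneg|].
  intros e [X [HX ->]]. exists (r_val m A B X). split; [|apply ERle_refl].
  exists X. auto using PD_PSD, PD_nonzero.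
Qed.

Lemma map_le_Q n m F G : positive_linear n m F -> positive_linear n m G -> map_le n m F G ->
  forall X, PSD n X -> nonzero n X -> forall v, Q m (F X) v <= Q m (G X) v.
Proof.
  intros HF HG H X HX HZ v. destruct (PSD_normalize n X HX HZ) as [c [Hc HX1]].
  pose proof (PSD_Q _ _ v (H _ HX1)) as Hv.
  rewrite Q_msub, (pl_Q_scale n m G), (pl_Q_scale n m F) in Hv by (auto; apply HX).
  assert (0 < / c) by (apply Rinv_0_lt_compat; auto). nra.
Qed.

Section Monotonicity.
Variables (n m : nat) (A B A1 B1 : Map).
Hypotheses (HA1 : positive_linear n m A1) (HB1 : positive_linear n m B1).
Hypothesis HleA : forall X, PSD n X -> nonzero n X -> forall v, Q m (A1 X) v <= Q m (A X) v.
Hypothesis HleB : forall X, PSD n X -> nonzero n X -> forall v, Q m (B X) v <= Q m (B1 X) v.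

Lemma r_val_mono X : PSD n X -> nonzero n X -> ERle (r_val m A1 B1 X) (r_val m A B X).
Proof.
  intros HX HZ. apply einf_mono; [apply r_val_set_nonneg..|].
  intros e [t [-> [Ht H]]]. exists (Fin t). split; [|apply ERle_refl]. exists t.
  enough (feasible m A1 B1 X t) as Hf by (split; auto).
  apply (feasible_intro n); auto; [apply HX|]. intros v.
  pose proof (feasible_Q m A B X t v (conj Ht H)). specialize (HleA X HX HZ v). specialize (HleB X HX HZ v).
  nra.
Qed.

Lemma rho_rhohat_mono : (1 <= n)%nat ->
  ERle (rho n m A1 B1) (rho n m A B) /\ ERle (rhohat n m A1 B1) (rhohat n m A B).
Proof.
  intros Hn. split; apply einf_mono; try apply rho_set_nonneg; try apply rhohat_set_nonneg.
  - intros e [X [HX ->]]. exists (r_val m A1 B1 X). split; eauto.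
    apply r_val_mono; auto using PD_PSD, PD_nonzero.
  - intros e [X [HX [HZ ->]]]. exists (r_val m A1 B1 X). split; eauto. apply r_val_mono; auto.
Qed.

End Monotonicity.

(** * Part (3): existence of a weakly optimal density matrix *)

Lemma CP_Q_cv n m F (X : nat -> Mat) Y v : is_CP n m F -> (forall k, Herm n (X k)) -> Herm n Y -> Mcv n X Y ->
  Un_cv (fun k => Q m (F (X k)) v) (Q m (F Y) v).
Proof.
  intros HF HX HY H. apply (Q_cv m (fun k => F (X k)) (F Y) (fun _ => v)).
  - apply (CP_cv n); auto.
  - intros; apply Ccv_const.
Qed.

Lemma feasible_limit n m A B q (X : nat -> Mat) eps : is_CP n m A -> is_CP n m B -> 0 <= q -> Un_cv eps 0 ->
  (forall k, PSD1 n (X k)) ->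
  (forall k v, Q m (A (X k)) v <= q * Q m (B (X k)) v + eps k * vnorm2 m v) ->
  exists Y, PSD1 n Y /\ feasible m A B Y q.
Proof.
  intros HA HB Hq Heps HX Hle.
  destruct (PSD1_cv_subseq n X HX) as [phi [Hphi [Y [HY HXY]]]].
  assert (HXh : forall k, Herm n (X (phi k))) by (intros; apply HX).
  exists Y. split; auto. apply (feasible_intro n); auto using CP_positive_linear; [apply HY|].
  intros v. enough (Q m (A Y) v - q * Q m (B Y) v <= 0 * vnorm2 m v) by lra.
  apply (@Rle_cv_lim (fun k => Q m (A (X (phi k))) v - q * Q m (B (X (phi k))) v)
                     (fun k => eps (phi k) * vnorm2 m v)).
  - intros k. specialize (Hle (phi k) v). lra.
  - apply CV_minus; [|apply CV_mult; [apply Un_cv_const|]]; apply (CP_Q_cv n); auto; apply HY.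
  - apply CV_mult; [|apply Un_cv_const].
    apply (Un_cv_subseq eps); auto using strict_incr_ge.
Qed.

Lemma weakly_optimal_exists n m A B : (1 <= n)%nat -> is_CP n m A -> is_CP n m B ->
  exists Y, PSD1 n Y /\ weakly_optimal n m A B Y.
Proof.
  intros Hn HA HB. pose proof (CP_positive_linear _ _ _ HA) as GA.
  pose proof (CP_positive_linear _ _ _ HB) as GB.
  pose proof (rhohat_nonneg n m A B) as Hp0.
  destruct (rhohat n m A B) as [p|] eqn:Erh.
  - set (K := density_bound n * entry_norm m (B (Id n))).
    assert (Hk : forall k : nat, exists X, PSD1 n X /\
      forall v, Q m (A X) v <= p * Q m (B X) v + / INR (S k) * K * vnorm2 m v).
    { intros k. assert (0 < / INR (S k)) by (apply Rinv_0_lt_compat, lt_0_INR; lia).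
      destruct (rhohat_lt n m A B p (p + / INR (S k))) as [X [t [HX [Hf Ht]]]];
        [auto|auto|rewrite Erh; simpl; lra|lra|].
      exists X. split; auto. intros v.
      pose proof (PSD_Q _ _ v (pl_psd _ _ _ GB _ (PSD1_PSD _ _ HX))) as HB0.
      pose proof (feasible_Q_le m A B X t (p + / INR (S k)) v Hf ltac:(lra) HB0).
      pose proof (pl_Q_PSD1_le n m B X v GB HX) as HBK. fold K in HBK. nra. }
    destruct (choice _ Hk) as [X HX].
    destruct (feasible_limit n m A B p X (fun k => / INR (S k) * K)) as [Y [HY Hf]]; auto;
      try (intros; apply HX).
    { rewrite <- (Rmult_0_l K). apply CV_mult; [apply Un_cv_inv_succ|apply Un_cv_const]. }
    exists Y. split; auto. split; [apply HY|split; [apply PSD1_nonzero; auto|]].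
    apply ERle_antisym; [rewrite Erh; apply (r_val_le m A B Y p Hf)|].
    apply rhohat_le; [apply HY|apply PSD1_nonzero; auto].
  - pose proof (scaled_Id_PSD1 n Hn) as HY. exists (mscale (/ INR n) (Id n)).
    split; auto. split; [apply HY|split; [apply PSD1_nonzero; auto|]].
    pose proof (rhohat_le n m A B _ (PSD1_PSD _ _ HY) (PSD1_nonzero _ _ HY)) as H. rewrite Erh in H.
    rewrite Erh. destruct (r_val m A B _); simpl in H; [tauto|reflexivity].
Qed.

(** * Parts (4) and (5): when [rho] and [rhohat] coincide *)

(* Perturbing [Y] to the positive definite [Y + e I] costs [e * |(t + d) B(I) - A(I)|],
   which the coercivity of [B(Y)] absorbs for small [e]. *)
Lemma rho_le_of_feasible_PD_image n m A B Y t d :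
  positive_linear n m A -> positive_linear n m B -> PSD n Y -> PD m (B Y) ->
  feasible m A B Y t -> 0 < d -> ERle (rho n m A B) (Fin (t + d)).
Proof.
  intros HA HB HY HBY Hf Hd. destruct (PD_coercive m (B Y) HBY) as [c [Hc HcQ]].
  set (K := entry_norm m (msub (mscale (t + d) (B (Id n))) (A (Id n)))).
  pose proof (entry_norm_nonneg m (msub (mscale (t + d) (B (Id n))) (A (Id n)))) as HK. fold K in HK.
  set (e := d * c / (K + 1)).
  assert (He : 0 < e) by (unfold e; apply Rdiv_lt_0_compat; nra).
  assert (HeK : e * K <= d * c).
  { unfold e. apply (Rmult_le_reg_r (K + 1)); [lra|]. field_simplify; nra. }
  assert (HYh : Herm n Y) by apply HY.
  eapply ERle_trans; [apply (rho_le n m A B (madd Y (mscale e (Id n)))), PSD_add_scaled_Id_PD; auto|].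
  apply r_val_le. destruct Hf as [Ht Hpsd].
  apply (feasible_intro n); auto; [apply Herm_madd; auto; apply Herm_mscale, Herm_Id|lra|].
  intros v. rewrite (pl_Q_add n m A), (pl_Q_add n m B), (pl_Q_scale n m A), (pl_Q_scale n m B);
    auto using Herm_Id; try (apply Herm_mscale, Herm_Id).
  pose proof (feasible_Q _ _ _ _ _ v (conj Ht Hpsd)). pose proof (HcQ v).
  pose proof (Q_entry_norm_bounds m (msub (mscale (t + d) (B (Id n))) (A (Id n))) v) as HQ.
  rewrite Q_msub, Q_mscale in HQ. fold K in HQ.
  pose proof (vnorm2_nonneg m v).
  assert (e * (K * vnorm2 m v) <= d * (c * vnorm2 m v)) by nra. nra.
Qed.

Lemma rho_eq_rhohat_of_PD_image n m A B : (1 <= n)%nat ->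
  positive_linear n m A -> positive_linear n m B ->
  (exists Y, weakly_optimal n m A B Y /\ (PD m (B Y) \/ PD m (A Y))) ->
  rho n m A B <> Inf -> rho n m A B = rhohat n m A B.
Proof.
  intros Hn HA HB [Y [[HY [HZ Hr]] Hpd]] Hinf. pose proof (rhohat_le_rho n m A B Hn) as Hle.
  destruct (rho n m A B) as [x|] eqn:Erho; [|congruence].
  destruct (rhohat n m A B) as [p|] eqn:Erh; [|simpl in Hle; tauto].
  apply ERle_antisym; [|auto]. rewrite <- Erho. apply ERle_Fin_eps. intros d Hd.
  destruct (r_val_lt m A B Y p (p + d / 2)) as [t [Hf Ht]]; [rewrite Hr; simpl; lra|lra|].
  assert (HBY : PD m (B Y)).
  { destruct Hpd as [H|H]; auto. apply PD_intro; [apply (pl_herm _ _ _ HB), HY|].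
    intros v Hv. pose proof (PD_Q m (A Y) v H Hv). pose proof (feasible_Q _ _ _ _ _ v Hf).
    destruct Hf as [Ht0 _]. nra. }
  eapply ERle_trans; [apply (rho_le_of_feasible_PD_image n m A B Y t (d / 2)); auto; lra|].
  simpl; lra.
Qed.

Lemma rho_eq_rhohat_of_map_pos n m A B : (1 <= n)%nat -> is_CP n m A -> is_CP n m B ->
  rho n m A B <> Inf -> (map_pos n m A \/ map_pos n m B) -> rho n m A B = rhohat n m A B.
Proof.
  intros Hn HA HB Hinf Hpos. destruct (weakly_optimal_exists n m A B Hn HA HB) as [Y [HY1 HW]].
  apply rho_eq_rhohat_of_PD_image; auto using CP_positive_linear.
  exists Y. split; auto. destruct Hpos as [H|H]; [right|left]; apply H; auto.
Qed.

(** * Parts (6) and (7): perturbations *)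

Definition ER_lt_Fin (e : ER) (q : R) : Prop := exists x, e = Fin x /\ x < q.

Lemma ER_cv_of_le_frequently (u : nat -> ER) L : (forall l, ERle (u l) L) ->
  (forall q, (forall N, exists l, (N <= l)%nat /\ ER_lt_Fin (u l) q) -> ERle L (Fin q)) ->
  ER_cv u L.
Proof.
  intros Hle Hfreq. destruct L as [p|]; simpl.
  - intros eps He. apply NNPP; intros Hno.
    enough (ERle (Fin p) (Fin (p - eps / 2))) by (simpl in *; lra).
    apply Hfreq. intros N. apply NNPP; intros HN. apply Hno. exists N. intros k Hk.
    specialize (Hle k). destruct (u k) as [x|] eqn:Ex; simpl in Hle; [|tauto].
    exists x. split; auto. apply Rabs_def1; [lra|].
    apply Rnot_le_lt; intros Hx. apply HN. exists k. split; auto. exists x. split; auto. lra.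
  - intros M. apply NNPP; intros Hno.
    enough (ERle Inf (Fin M)) by (simpl in *; auto).
    apply Hfreq. intros N. apply NNPP; intros HN. apply Hno. exists N. intros k Hk.
    destruct (u k) as [x|] eqn:Ex; simpl; auto.
    apply Rnot_lt_le; intros Hx. apply HN. exists k. split; auto. exists x. auto.
Qed.

Lemma ER_cv_of_ge_eventually_le (u : nat -> ER) p : (forall l, ERle (Fin p) (u l)) ->
  (forall eps, 0 < eps -> exists N, forall l, (N <= l)%nat -> ERle (u l) (Fin (p + eps))) ->
  ER_cv u (Fin p).
Proof.
  intros Hge Hev eps He. destruct (Hev (eps / 2)) as [N HN]; [lra|]. exists N. intros k Hk.
  specialize (HN k Hk). specialize (Hge k). destruct (u k) as [x|]; simpl in *; [|tauto].
  exists x. split; auto. apply Rabs_def1; lra.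
Qed.

Lemma entry_norm_cv0 m (E : nat -> Mat) : Mcv m E (fun _ _ => C0) ->
  Un_cv (fun k => entry_norm m (E k)) 0.
Proof.
  intros H. unfold entry_norm.
  replace 0 with (rsum m (fun _ => rsum m (fun _ => 0 + 0))) by (rewrite !rsum_const; ring).
  apply (rsum_cv m (fun k i => rsum m (fun j => Rabs (Cre (E k i j)) + Rabs (Cim (E k i j))))).
  intros i Hi. apply (rsum_cv m (fun k j => Rabs (Cre (E k i j)) + Rabs (Cim (E k i j)))).
  intros j Hj. destruct (H i j Hi Hj) as [Hre Him].
  apply CV_plus; rewrite <- Rabs_R0; apply cv_cvabs; auto.
Qed.

Section PerturbB.
Variables (n m : nat) (A B : Map) (D : nat -> Map).
Hypotheses (Hn : (1 <= n)%nat) (HA : is_CP n m A) (HB : is_CP n m B)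
  (HD : forall l, is_CP n m (D l) /\ map_pos n m (D l)).

Lemma rho_perturbB_le_rhohat l : ERle (rho n m A (map_add B (D l))) (rhohat n m A B).
Proof.
  pose proof (CP_positive_linear _ _ _ HA) as GA. pose proof (CP_positive_linear _ _ _ HB) as GB.
  pose proof (positive_linear_add _ _ _ _ GB (CP_positive_linear _ _ _ (proj1 (HD l)))) as GBD.
  destruct (weakly_optimal_exists n m A B Hn HA HB) as [Y [HY1 [HY [HZ Hr]]]].
  destruct (rhohat n m A B) as [p|] eqn:Erh; [|apply ERle_Inf].
  apply ERle_Fin_eps. intros d Hd.
  destruct (r_val_lt m A B Y p (p + d / 2)) as [t [Hf Ht]]; [rewrite Hr; simpl; lra|lra|].
  assert (HDY : PD m (D l Y)) by (apply (proj2 (HD l)); auto).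
  assert (Hf' : feasible m A (map_add B (D l)) Y t).
  { apply (feasible_intro n); auto; [apply HY|apply Hf|]. intros v. unfold map_add. rewrite Q_madd.
    pose proof (feasible_Q _ _ _ _ _ v Hf). pose proof (PSD_Q _ _ v (PD_PSD _ _ HDY)).
    destruct Hf as [Ht0 _]. nra. }
  assert (HBY : PD m (map_add B (D l) Y)).
  { apply PD_intro; [apply (pl_herm _ _ _ GBD), HY|]. intros v Hv. unfold map_add. rewrite Q_madd.
    pose proof (PD_Q _ _ v HDY Hv). pose proof (PSD_Q _ _ v (pl_psd _ _ _ GB Y HY)). lra. }
  eapply ERle_trans; [apply (rho_le_of_feasible_PD_image n m A _ Y t (d / 2)); auto; lra|].
  simpl; lra.
Qed.

(* Approximate minimizers for [B + D_l] are densities feasible for [B] up to the error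
   [q * D_l(X) <= q * 2n^2 |D_l(I)|], which vanishes; [feasible_limit] concludes. *)
Lemma rhohat_le_of_frequently_lt q : map_cv0 n m D ->
  (forall N, exists l, (N <= l)%nat /\ ER_lt_Fin (rho n m A (map_add B (D l))) q) ->
  ERle (rhohat n m A B) (Fin q).
Proof.
  intros Hcv H. pose proof (CP_positive_linear _ _ _ HA) as GA.
  pose proof (CP_positive_linear _ _ _ HB) as GB.
  assert (GD : forall l, positive_linear n m (D l)) by (intros; apply CP_positive_linear, HD).
  assert (Hsel : forall N, exists lX : nat * Mat, (N <= fst lX)%nat /\ PSD1 n (snd lX) /\
     exists t, feasible m A (map_add B (D (fst lX))) (snd lX) t /\ t <= q).
  { intros N. destruct (H N) as [l [Hl [x [Ex Hx]]]].
    destruct (rho_lt n m A (map_add B (D l)) x q) as [X [t [HX [Hf Ht]]]];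
      [rewrite Ex; simpl; lra|eauto|].
    destruct (feasible_normalize n m A (map_add B (D l)) X t) as [X' [HX' Hf']];
      auto using PD_PSD, PD_nonzero, positive_linear_add.
    exists (l, X'). simpl. split; [auto|split; [auto|exists t; split; [auto|lra]]]. }
  destruct (choice _ Hsel) as [lX HlX].
  set (K := fun N => density_bound n * entry_norm m (D (fst (lX N)) (Id n))).
  assert (Hq : 0 <= q) by (destruct (HlX 0%nat) as [_ [_ [t [[Ht _] Htq]]]]; lra).
  destruct (feasible_limit n m A B q (fun N => snd (lX N)) (fun N => q * K N)) as [Y [HY Hf]];
    auto; [|intros N; apply (HlX N)| |].
  - rewrite <- (Rmult_0_r q). apply CV_mult; [apply Un_cv_const|].
    unfold K. rewrite <- (Rmult_0_r (density_bound n)). apply CV_mult; [apply Un_cv_const|].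
    apply (Un_cv_subseq (fun l => entry_norm m (D l (Id n))) 0 (fun N => fst (lX N)));
      [intros; apply HlX|].
    apply entry_norm_cv0. intros i j Hi Hj. exact (Hcv (Id n) (Herm_Id n) i j Hi Hj).
  - intros N v. destruct (HlX N) as [_ [HX [t [Hf Htq]]]].
    set (l := fst (lX N)) in *. set (X := snd (lX N)) in *.
    pose proof (pl_psd _ _ _ (positive_linear_add _ _ _ _ GB (GD l)) _ (PSD1_PSD _ _ HX)) as HBD.
    pose proof (feasible_Q_le m A _ X t q v Hf Htq (PSD_Q _ _ v HBD)) as HAX.
    unfold map_add in HAX. rewrite Q_madd in HAX.
    pose proof (pl_Q_PSD1_le n m _ X v (GD l) HX). unfold K; fold l. nra.
  - eapply ERle_trans; [apply rhohat_le; [apply HY|apply PSD1_nonzero; auto]|].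
    apply r_val_le; auto.
Qed.

Lemma rho_perturbB_cv : map_cv0 n m D ->
  ER_cv (fun l => rho n m A (map_add B (D l))) (rhohat n m A B).
Proof.
  intros Hcv. apply ER_cv_of_le_frequently; [apply rho_perturbB_le_rhohat|].
  intros q; apply rhohat_le_of_frequently_lt; auto.
Qed.

End PerturbB.

Section PerturbA.
Variables (n m : nat) (A B : Map) (D : nat -> Map).
Hypotheses (Hn : (1 <= n)%nat) (HA : positive_linear n m A) (HB : positive_linear n m B)
  (HD : forall l, positive_linear n m (D l)) (Hcv : map_cv0 n m D) (HBI : PD m (B (Id n))).

Lemma rho_finite_of_PD_image_Id : exists p, rho n m A B = Fin p.
Proof.
  destruct (PD_coercive m _ HBI) as [c [Hc HcQ]].
  set (K := entry_norm m (A (Id n))).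
  assert (HK : 0 <= K) by apply entry_norm_nonneg.
  assert (Hle : ERle (rho n m A B) (Fin (K / c))).
  { eapply ERle_trans; [apply (rho_le n m A B (Id n)), PD_Id|]. apply r_val_le.
    apply (feasible_intro n); auto; [apply Herm_Id|apply Rle_mult_inv_pos; lra|].
    intros v. pose proof (Q_entry_norm_bounds m (A (Id n)) v). fold K in H.
    specialize (HcQ v). pose proof (vnorm2_nonneg m v).
    assert (K * vnorm2 m v = K / c * (c * vnorm2 m v)) by (field; lra).
    assert (K / c * (c * vnorm2 m v) <= K / c * Q m (B (Id n)) v)
      by (apply Rmult_le_compat_l; auto; apply Rle_mult_inv_pos; lra).
    lra. }
  destruct (rho n m A B) as [p|]; [eauto|simpl in Hle; tauto].
Qed.

(* [D_l(X) -> 0] is eventually dominated by [eps/2] times the coercivity constant of [B(X)]. *)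
Lemma rho_perturbA_eventually_le p eps : rho n m A B = Fin p -> 0 < eps ->
  exists N, forall l, (N <= l)%nat -> ERle (rho n m (map_add A (D l)) B) (Fin (p + eps)).
Proof.
  intros Ep He.
  destruct (rho_lt n m A B p (p + eps / 2)) as [X [t [HX [Hf Ht]]]]; [rewrite Ep; simpl; lra|lra|].
  assert (HXh : Herm n X) by apply HX.
  destruct (PD_coercive m _ (pl_PD_of_PD_image_Id n m B X HB HBI HX)) as [c [Hc HcQ]].
  assert (HK : Un_cv (fun l => entry_norm m (D l X)) 0).
  { apply entry_norm_cv0. intros i j Hi Hj. exact (Hcv X HXh i j Hi Hj). }
  destruct (HK (eps / 2 * c)) as [N HN]; [apply Rmult_lt_0_compat; lra|].
  exists N. intros l Hl. specialize (HN l Hl). unfold Rdist in HN.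
  rewrite Rminus_0_r, Rabs_pos_eq in HN by apply entry_norm_nonneg.
  eapply ERle_trans; [apply (rho_le n m _ B X HX)|].
  eapply ERle_trans; [apply (r_val_le m _ B X (t + eps / 2))|simpl; lra].
  apply (feasible_intro n); auto using positive_linear_add; [destruct Hf; lra|].
  intros v. unfold map_add. rewrite Q_madd. pose proof (feasible_Q _ _ _ _ _ v Hf).
  pose proof (Q_entry_norm_bounds m (D l X) v). specialize (HcQ v).
  pose proof (vnorm2_nonneg m v). nra.
Qed.

Lemma rho_perturbA_cv : ER_cv (fun l => rho n m (map_add A (D l)) B) (rho n m A B).
Proof.
  destruct rho_finite_of_PD_image_Id as [p Ep]. rewrite Ep.
  apply ER_cv_of_ge_eventually_le; [|intros; apply rho_perturbA_eventually_le; auto].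
  intros l. rewrite <- Ep.
  refine (proj1 (rho_rhohat_mono n m (map_add A (D l)) B A B _ _ _ _ Hn));
    auto using positive_linear_add; [|intros; lra].
  intros X HX _ v. unfold map_add. rewrite Q_madd.
  pose proof (PSD_Q _ _ v (pl_psd _ _ _ (HD l) _ HX)). lra.
Qed.

End PerturbA.

Theorem lemma7p3 (n m : nat) (A B : Map) (Hn : (1 <= n)%nat)
  (HA : is_CP n m A) (HB : is_CP n m B) :
  (* (1) *)
  ERle (rhohat n m A B) (rho n m A B) /\
  (* (2) *)
  (forall A1 B1 : Map, is_CP n m A1 -> is_CP n m B1 ->
     map_le n m A1 A -> map_le n m B B1 ->
     ERle (rho n m A1 B1) (rho n m A B) /\
     ERle (rhohat n m A1 B1) (rhohat n m A B)) /\
  (* (3) *)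
  (exists Y, PSD1 n Y /\ weakly_optimal n m A B Y) /\
  (* (4) *)
  ((exists Y, weakly_optimal n m A B Y /\ (PD m (B Y) \/ PD m (A Y))) ->
     rho n m A B <> Inf -> rho n m A B = rhohat n m A B) /\
  (* (5) *)
  (rho n m A B <> Inf -> (map_pos n m A \/ map_pos n m B) ->
     rho n m A B = rhohat n m A B) /\
  (* (6) *)
  (forall D : nat -> Map, (forall l, is_CP n m (D l) /\ map_pos n m (D l)) ->
     map_cv0 n m D ->
     ER_cv (fun l => rho n m A (map_add B (D l))) (rhohat n m A B)) /\
  (* (7) *)
  (forall D : nat -> Map, (forall l, is_CP n m (D l) /\ map_pos n m (D l)) ->
     map_cv0 n m D -> PD m (B (Id n)) ->
     ER_cv (fun l => rho n m (map_add A (D l)) B) (rho n m A B)).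
Proof.
  pose proof (CP_positive_linear _ _ _ HA) as GA. pose proof (CP_positive_linear _ _ _ HB) as GB.
  split; [apply rhohat_le_rho; auto|].
  split.
  { intros A1 B1 HA1 HB1 HleA HleB.
    pose proof (CP_positive_linear _ _ _ HA1). pose proof (CP_positive_linear _ _ _ HB1).
    apply rho_rhohat_mono; auto; apply map_le_Q; auto. }
  split; [apply weakly_optimal_exists; auto|].
  split; [intros; apply rho_eq_rhohat_of_PD_image; auto|].
  split; [intros; apply rho_eq_rhohat_of_map_pos; auto|].
  split; [intros; apply rho_perturbB_cv; auto|].
  intros D HD Hcv HBI. apply rho_perturbA_cv; auto.
  intros l; apply CP_positive_linear, HD.
Qed.
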